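(* Let $a_1,a_2\ge0$ and $D=D_{a_1,a_2}$. For any horizontal edge $h\in D_1$ and vertical edge $v_j\in D_2$ such that $h$ comes before $v_j$ along $D$ (traversed from $(0,0)$ to $(a_1,a_2)$), letting $hv_j$ be the subpath of $D$ from $h$ to $v_j$ inclusive, we have $$a_1\big(|(hv_j)_2|-1\big)<a_2\,|(hv_j)_1|.$$
   Context: $D=D_{a_1,a_2}$ is the maximal Dyck path: the lattice path of unit East and North steps from $(0,0)$ to $(a_1,a_2)$ staying weakly below the diagonal of the rectangle $[0,a_1]\times[0,a_2]$ and closest to it (every lattice point above $D$ is strictly above the diagonal). $D_1$ is its set of horizontal edges, $D_2=\{v_1,\dots,v_{a_2}\}$ its vertical edges, $v_j$ being the North step ending at $y$-coordinate $j$. For a subpath $P$, $(P)_1$ and $(P)_2$ denote its sets of horizontal and vertical edges. *)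

From mathcomp Require Import all_boot.
Set Implicit Arguments. Unset Strict Implicit. Unset Printing Implicit Defensive.

(* A lattice path from (0,0) with unit steps is encoded as a sequence of steps:
   [true] = North (vertical) step, [false] = East (horizontal) step.
   The k-th edge of the path is the k-th step (0-based position). *)

(* Greedy construction of the maximal Dyck path D_{a1,a2}: standing at the lattice
   point (x,y), step North iff y < a2 and the point (x,y+1) is weakly below the
   diagonal of [0,a1]x[0,a2], i.e. (y+1)*a1 <= x*a2; otherwise step East
   (if x < a1).  This is the path weakly below the diagonal such that every lattice
   point strictly above it is strictly above the diagonal. *)
Fixpoint maxdyck_aux (a1 a2 fuel x y : nat) : seq bool :=
  match fuel with
  | 0 => [::]
  | n.+1 =>
      if (y < a2) && ((y + 1) * a1 <= x * a2) then true :: maxdyck_aux a1 a2 n x y.+1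
      else if x < a1 then false :: maxdyck_aux a1 a2 n x.+1 y
      else [::]
  end.

Definition maxdyck (a1 a2 : nat) : seq bool := maxdyck_aux a1 a2 (a1 + a2) 0 0.

Definition subpath (D : seq bool) (i k : nat) : seq bool := drop i (take k.+1 D).

Definition n_horiz (P : seq bool) : nat := count (fun b => ~~ b) P.
Definition n_vert (P : seq bool) : nat := count id P.

(* v_j : position (0-based) in D of the North step ending at height j (1 <= j <= a2),
   i.e. the j-th North step of D. *)
Definition vedge (D : seq bool) (j : nat) : nat :=
  nth 0 (filter (fun k => nth false D k) (iota 0 (size D))) j.-1.

From mathcomp Require Import all_boot zify.

(* Let (x_k, y_k) be the lattice point reached after the first k steps of D.
   The greedy rule makes a North step at a position k iff
   y_k < a2 and (y_k + 1) a1 <= x_k a2.  At the East step h this fails although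
   y_h < a2, so (y_h + 1) a1 > x_h a2; at the North step v_j it holds, so
   (y_v + 1) a1 <= x_v a2.  Subtracting, a1 (y_v - y_h) < a2 (x_v - x_h), and
   hv_j has x_v - x_h East steps and y_v - y_h + 1 North steps. *)

Definition north_ok (a1 a2 x y : nat) : bool := (y < a2) && ((y + 1) * a1 <= x * a2).

Lemma nth_maxdyck_aux a1 a2 n x y k :
  let s := maxdyck_aux a1 a2 n x y in
  k < size s ->
  nth false s k = north_ok a1 a2 (x + n_horiz (take k s)) (y + n_vert (take k s)).
Proof.
rewrite /n_horiz /n_vert /north_ok.
elim: n x y k => [|n IHn] x y k //=.
case: ifP => [north|east]; last case: ifP => // _.
- case: k => [|k] /=; first by rewrite !addn0 north.
  by move=> /(IHn x y.+1 k); rewrite add1n !addnS !addSn.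
- case: k => [|k] /=; first by rewrite !addn0 east.
  by move=> /(IHn x.+1 y k); rewrite add0n add1n !addnS !addSn.
Qed.

Lemma nth_maxdyck a1 a2 k :
  k < size (maxdyck a1 a2) ->
  nth false (maxdyck a1 a2) k =
  north_ok a1 a2 (n_horiz (take k (maxdyck a1 a2))) (n_vert (take k (maxdyck a1 a2))).
Proof. exact: nth_maxdyck_aux. Qed.

(* [vedge] returns the junk value 0 when D has fewer than j North steps. *)
Lemma vedge_north D j : 0 < vedge D j -> vedge D j < size D /\ nth false D (vedge D j).
Proof.
rewrite /vedge; set F := filter _ _.
case: (ltnP j.-1 (size F)) => [jF|jF]; last by rewrite nth_default.
have : nth 0 F j.-1 \in F by exact: mem_nth.
by rewrite mem_filter mem_iota add0n => /andP[north /andP[_ lt_size]].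
Qed.

Lemma count_take_split {T} (p : pred T) (s : seq T) {i k} :
  i <= k -> count p (take k s) = count p (take i s) + count p (drop i (take k s)).
Proof. by move=> le_ik; rewrite -count_cat -{1}(cat_take_drop i (take k s)) take_takel. Qed.

Theorem corollary3p3 (a1 a2 : nat) (h j : nat) :
  let D := maxdyck a1 a2 in
  h < size D -> nth true D h = false ->
  1 <= j <= a2 ->
  h < vedge D j ->
  let P := subpath D h (vedge D j) in
  a1 * (n_vert P - 1) < a2 * n_horiz P.
Proof.
move=> D h_size h_east _ lt_hv /=; set v := vedge D j in lt_hv *.
rewrite /subpath /n_vert /n_horiz; set P := drop h (take v.+1 D).
have [v_size v_north] := vedge_north D j (leq_ltn_trans (leq0n h) lt_hv).
rewrite -/v in v_size v_north.
have le_hv : h <= v := ltnW lt_hv.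
have vert_v := count_take_split id D le_hv.
have vert_P := count_take_split id D (leqW le_hv).
have horiz_P := count_take_split (fun b => ~~ b) D (leqW le_hv).
have take_v1 : take v.+1 D = rcons (take v D) true by rewrite (take_nth false) ?v_north.
rewrite -/P take_v1 -cats1 !count_cat /= in vert_P horiz_P.
have := nth_maxdyck a1 a2 v v_size; rewrite -/D v_north /north_ok /n_vert /n_horiz.
move=> /esym/andP[lt_v diag_v].
have := nth_maxdyck a1 a2 h h_size.
rewrite -/D (set_nth_default true) // h_east /north_ok /n_vert /n_horiz.
move=> /esym/negbT.
have -> : count id (take h D) < a2 by apply: leq_ltn_trans lt_v; rewrite vert_v leq_addr.
rewrite -ltnNge => diag_h.
nia.
Qed.
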